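(* Let $k$ be an odd positive integer and $\mu, n$ positive integers such that $k^4\mu^4 n^4 - 16k(4\mu^2+n^2) = s^2$ for some integer $s$. Then \[ (5k\mu^2 - 4)(5kn^2 - 16) \leq 189. \] *)

From Stdlib Require Import ZArith Lia.

(** Put x = k mu^2 and y = k n^2, so that x y is a square and the hypothesis
    says that the monic quadratic T^2 - x y T + (16 x + 4 y) has a square
    discriminant, hence an integer root t with 2 t <= x y.  For y >= 4 this
    forces t <= 16, and t (x y - t) = 16 x + 4 y factors as
    (t x - 4) (t y - 16) = t^3 + 64.  So x and y range over a finite set,
    which is checked by computation. *)

From Stdlib Require Import ZArith Lia List.
Open Scope Z_scope.

Lemma quadratic_root_of_square_discriminant (A c s : Z) :
  0 <= A -> 0 <= c -> A^2 - 4 * c = s^2 ->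
  exists q, 0 <= q /\ 2 * q <= A /\ q * (A - q) = c.
Proof.
  intros HA Hc Hdisc.
  set (r := Z.abs s).
  assert (Hr : A^2 - 4 * c = r^2) by (subst r; rewrite Hdisc; lia).
  assert (Hr0 : 0 <= r) by lia.
  assert (HrA : r <= A) by nia.
  destruct (Z.Even_or_Odd (A - r)) as [[q Hq] | [q Hq]].
  - exists q; repeat split; nia.
  - exfalso.
    assert (Hodd : 2 * (2 * q * q + 2 * q + 2 * q * r + r) + 1 = 4 * c) by nia.
    lia.
Qed.

Lemma small_root_le_16 (x y q : Z) :
  1 <= x -> 4 <= y -> 0 <= q -> 2 * q <= x * y ->
  q * (x * y - q) = 16 * x + 4 * y -> q <= 16.
Proof. intros; nia. Qed.

Lemma root_factorization (t x y : Z) :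
  t * (x * y - t) = 16 * x + 4 * y -> (t * x - 4) * (t * y - 16) = t^3 + 64.
Proof.
  intros Hroot.
  assert (E : (t * x - 4) * (t * y - 16) - (t^3 + 64)
              = t * (t * (x * y - t) - (16 * x + 4 * y))) by ring.
  rewrite Hroot, Z.sub_diag, Z.mul_0_r in E; lia.
Qed.

Lemma root_factors_pos (t x y : Z) :
  1 <= t -> 1 <= x -> 1 <= y -> t * (x * y - t) = 16 * x + 4 * y ->
  1 <= t * x - 4 /\ 1 <= t * y - 16.
Proof.
  intros Ht Hx Hy Hroot.
  assert (Hy_factor : x * (t * y - 16) = t^2 + 4 * y) by nia.
  assert (1 <= t * y - 16) by nia.
  pose proof (root_factorization t x y Hroot).
  split; nia.
Qed.

Definition Zforall_range (lo hi : Z) (f : Z -> bool) : bool :=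
  forallb (fun i => f (lo + Z.of_nat i)) (seq 0 (Z.to_nat (hi - lo + 1))).

Lemma Zforall_rangeP (lo hi : Z) (f : Z -> bool) :
  Zforall_range lo hi f = true -> forall z, lo <= z <= hi -> f z = true.
Proof.
  unfold Zforall_range; rewrite forallb_forall; intros Hall z Hz.
  specialize (Hall (Z.to_nat (z - lo))).
  replace (lo + Z.of_nat (Z.to_nat (z - lo))) with z in Hall by lia.
  apply Hall, in_seq; lia.
Qed.

Definition factorization_bound_holds (t x y : Z) : bool :=
  negb ((t * x - 4) * (t * y - 16) =? t^3 + 64)
  || negb (Z.sqrt (x * y) * Z.sqrt (x * y) =? x * y)
  || ((5 * x - 4) * (5 * y - 16) <=? 189).

(* Both factors are at least 1, so t x <= t^3 + 68 and t y <= t^3 + 80. *)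
Lemma factorization_bound_table :
  Zforall_range 1 16 (fun t =>
    Zforall_range 1 ((t^3 + 68) / t) (fun x =>
      Zforall_range 1 ((t^3 + 80) / t) (factorization_bound_holds t x))) = true.
Proof. vm_compute; reflexivity. Qed.

Lemma bound_of_small_root (t x y m : Z) :
  1 <= t <= 16 -> 1 <= x -> 1 <= y -> 0 <= m -> m * m = x * y ->
  t * (x * y - t) = 16 * x + 4 * y ->
  (5 * x - 4) * (5 * y - 16) <= 189.
Proof.
  intros Ht Hx Hy Hm Hsq Hroot.
  pose proof (root_factorization t x y Hroot) as Hfact.
  destruct (root_factors_pos t x y ltac:(lia) Hx Hy Hroot) as [Hdx Hdy].
  assert (Hxb : x <= (t^3 + 68) / t) by (apply Z.div_le_lower_bound; nia).
  assert (Hyb : y <= (t^3 + 80) / t) by (apply Z.div_le_lower_bound; nia).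
  pose proof (Zforall_rangeP _ _ _ factorization_bound_table t Ht) as Ht'.
  pose proof (Zforall_rangeP _ _ _ Ht' x ltac:(lia)) as Hx'.
  pose proof (Zforall_rangeP _ _ _ Hx' y ltac:(lia)) as Hxy.
  unfold factorization_bound_holds in Hxy.
  rewrite Hfact, <- Hsq, Z.sqrt_square, !Z.eqb_refl in Hxy by lia.
  apply Z.leb_le, Hxy.
Qed.

Lemma bound_of_square_discriminant (x y m s : Z) :
  1 <= x -> 1 <= y -> 0 <= m -> m * m = x * y ->
  (x * y)^2 - 4 * (16 * x + 4 * y) = s^2 ->
  (5 * x - 4) * (5 * y - 16) <= 189.
Proof.
  intros Hx Hy Hm Hsq Hdisc.
  destruct (Z_lt_le_dec y 4) as [Hy4 | Hy4].
  { assert (0 < 5 * x - 4) by lia; assert (5 * y - 16 < 0) by lia; nia. }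
  destruct (quadratic_root_of_square_discriminant (x * y) (16 * x + 4 * y) s
              ltac:(nia) ltac:(lia) Hdisc) as (t & Ht0 & Ht2 & Hroot).
  assert (Ht1 : 1 <= t) by (destruct (Z.eq_dec t 0); subst; lia).
  pose proof (small_root_le_16 x y t Hx Hy4 Ht0 Ht2 Hroot).
  exact (bound_of_small_root t x y m ltac:(lia) Hx Hy Hm Hsq Hroot).
Qed.

Theorem lemma7 (k mu n s : Z) :
  0 < k -> Z.Odd k -> 0 < mu -> 0 < n ->
  k^4 * mu^4 * n^4 - 16 * k * (4 * mu^2 + n^2) = s^2 ->
  (5 * k * mu^2 - 4) * (5 * k * n^2 - 16) <= 189.
Proof.
  intros Hk _ Hmu Hn Hdisc.
  replace (5 * k * mu^2) with (5 * (k * mu^2)) by ring.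
  replace (5 * k * n^2) with (5 * (k * n^2)) by ring.
  apply (bound_of_square_discriminant _ _ (k * mu * n) s); [nia | nia | nia | ring |].
  rewrite <- Hdisc; ring.
Qed.
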